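(* Let $\phi,\psi:\mathbb{N}\cup\{0\}\to\mathbb{R}_+$ be such that $\phi$ and $\psi^{-1}$ (i.e. $n\mapsto\psi(n)^{-1}$) both satisfy: $\sum_kC^k\chi(k)(k!)^{-2}<\infty$ for every $C>0$. Then in each of the following cases $(E,F)$ with pairing $(\cdot,\cdot)$ is a dual pair satisfying $F\subseteq E'$ and $E\subseteq F'$: (1) $E=T_\phi(V)$, $F=T_\phi(V)$, $(\cdot,\cdot)=\langle\cdot,\cdot\rangle_\phi$; (2) $E=T_\phi(V)$, $F=T_{\psi^{-1}}(V)$, $(\cdot,\cdot)=\langle\cdot,\cdot\rangle_{\sqrt{\phi/\psi}}$.
   Context: $V$ is a finite-dimensional real inner product space, $\langle\cdot,\cdot\rangle_k$ the induced Hilbert–Schmidt inner product on $V^{\otimes k}$, $T(V)=\bigoplus_kV^{\otimes k}$. For $\chi:\mathbb{N}\cup\{0\}\to\mathbb{R}_+$, $\langle a,b\rangle_\chi=\sum_k\chi(k)\langle a_k,b_k\rangle_k$ and $T_\chi(V)$ is the Hilbert-space completion of $T(V)$ under this inner product (with its norm topology). A dual pair $(E,F)$ of linear spaces is a bilinear map $(\cdot,\cdot):E\times F\to\mathbb{R}$ such that $\{(e,\cdot):e\in E\}$ separates points of $F$ and $\{(\cdot,f):f\in F\}$ separates points of $E$; $F\subseteq E'$ means each functional $(\cdot,f)$ is continuous on $E$ (and similarly $E\subseteq F'$). *)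

From HB Require Import structures.
From mathcomp Require Import all_boot all_order all_algebra.
From mathcomp Require Import all_classical all_reals all_analysis.
Set Implicit Arguments. Unset Strict Implicit. Unset Printing Implicit Defensive.
Import Order.TTheory GRing.Theory Num.Theory.
Import numFieldNormedType.Exports.
Local Open Scope ring_scope.

(* V = R^d with its standard inner product (orthonormal basis 'I_d).
   V^{(x)k} is identified with the arrays indexed by words of length k over
   'I_d; the Hilbert-Schmidt inner product is the sum of coordinate products. *)
Definition tens (R : realType) (d k : nat) := k.-tuple 'I_d -> R.

Definition tseq (R : realType) (d : nat) := forall k : nat, tens R d k.

Definition hs (R : realType) (d k : nat) (x y : tens R d k) : R :=
  \sum_(w : k.-tuple 'I_d) x w * y w.

Definition tzero (R : realType) (d : nat) : tseq R d := fun k w => 0.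
Definition tadd (R : realType) (d : nat) (a b : tseq R d) : tseq R d :=
  fun k w => a k w + b k w.
Definition tscale (R : realType) (d : nat) (c : R) (a : tseq R d) : tseq R d :=
  fun k w => c * a k w.
Definition tsub (R : realType) (d : nat) (a b : tseq R d) : tseq R d :=
  fun k w => a k w - b k w.
Definition teq (R : realType) (d : nat) (a b : tseq R d) : Prop :=
  forall k w, a k w = b k w.

Definition wpair (R : realType) (d : nat) (chi : nat -> R) (a b : tseq R d) : R :=
  limn (series (fun k => chi k * hs (a k) (b k))).
(* the real limit of the partial sums; the series converges absolutely for
   a, b in the relevant spaces (Cauchy-Schwarz) *)

(* T_chi(V): the Hilbert space completion of T(V) under <.,.>_chi, realised
   concretely as the sequences with finite chi-weighted norm. *)
Definition inT (R : realType) (d : nat) (chi : nat -> R) (a : tseq R d) : Prop :=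
  cvgn (series (fun k => chi k * hs (a k) (a k))).

Definition wnorm (R : realType) (d : nat) (chi : nat -> R) (a : tseq R d) : R :=
  Num.sqrt (wpair chi a a).

Definition growth_cond (R : realType) (chi : nat -> R) : Prop :=
  forall C : R, 0 < C ->
    cvgn (series (fun k => C ^+ k * chi k / ((k`!)%:R ^+ 2))).

Definition lin_subspace (R : realType) (d : nat) (E : tseq R d -> Prop) : Prop :=
  E (@tzero R d) /\
  (forall c a b, E a -> E b -> E (tadd (tscale c a) b)).

Definition dual_pair (R : realType) (d : nat) (E F : tseq R d -> Prop)
    (p : tseq R d -> tseq R d -> R) : Prop :=
  lin_subspace E /\ lin_subspace F /\
      (forall c e1 e2 f, E e1 -> E e2 -> F f ->
         p (tadd (tscale c e1) e2) f = c * p e1 f + p e2 f) /\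
      (forall c e f1 f2, E e -> F f1 -> F f2 ->
         p e (tadd (tscale c f1) f2) = c * p e f1 + p e f2) /\
      (forall f1 f2, F f1 -> F f2 ->
         (forall e, E e -> p e f1 = p e f2) -> teq f1 f2) /\
      (forall e1 e2, E e1 -> E e2 ->
         (forall f, F f -> p e1 f = p e2 f) -> teq e1 e2).

Definition cont_on (R : realType) (d : nat) (E : tseq R d -> Prop)
    (nrm : tseq R d -> R) (g : tseq R d -> R) : Prop :=
  forall a, E a -> forall eps : R, 0 < eps ->
    exists2 delta : R, 0 < delta &
      forall a', E a' -> nrm (tsub a' a) < delta -> `|g a' - g a| < eps.

(* F \subseteq E' : every (.,f), f in F, is continuous on E *)
Definition sub_dualL (R : realType) (d : nat) (E F : tseq R d -> Prop)
    (nE : tseq R d -> R) (p : tseq R d -> tseq R d -> R) : Prop :=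
  forall f, F f -> cont_on E nE (fun e => p e f).

(* E \subseteq F' : every (e,.), e in E, is continuous on F *)
Definition sub_dualR (R : realType) (d : nat) (E F : tseq R d -> Prop)
    (nF : tseq R d -> R) (p : tseq R d -> tseq R d -> R) : Prop :=
  forall e, E e -> cont_on F nF (fun f => p e f).

(* If [ga_k ^ 2 <= al_k be_k], weighted AM-GM gives for every [t > 0]
     [|ga_k <a_k, b_k>| <= (t al_k |a_k|^2 + t^-1 be_k |b_k|^2) / 2],
   so [<., .>_ga] converges absolutely on [T_al x T_be], is bilinear there and
   satisfies [|<a, b>_ga| <= (t |a|_al^2 + t^-1 |b|_be^2) / 2]; taking
   [t = 1/q] when [|a|_al < q] gives continuity in each variable. Pairing with
   the basis tensor [e_w] of degree [k] returns [ga_k b_k(w)], so the pairing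
   separates points when [ga] never vanishes. Both cases of the theorem are
   instances, with [(al, be, ga) = (phi, phi, phi)] and
   [(phi, 1/psi, sqrt (phi/psi))]. *)

From HB Require Import structures.
From mathcomp Require Import all_boot all_order all_algebra.
From mathcomp Require Import all_classical all_reals all_analysis.
From mathcomp Require Import ring lra.
Import Order.TTheory GRing.Theory Num.Theory.
Import numFieldNormedType.Exports.
Local Open Scope classical_set_scope.
Local Open Scope ring_scope.

Lemma cross_term_le {R : realFieldType} {a b g : R} (x y : R) :
  0 < a -> 0 <= b -> g ^+ 2 <= a * b ->
  2 * (g * (x * y)) <= a * x ^+ 2 + b * y ^+ 2.
Proof.
move=> a_gt0 b_ge0 g_le.
suff : 0 <= a * (a * x ^+ 2 + b * y ^+ 2 - 2 * (g * (x * y))).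
  by rewrite pmulr_rge0 // subr_ge0.
have -> : a * (a * x ^+ 2 + b * y ^+ 2 - 2 * (g * (x * y))) =
    (a * x - g * y) ^+ 2 + (a * b - g ^+ 2) * y ^+ 2 by ring.
by rewrite addr_ge0 ?sqr_ge0 // mulr_ge0 ?sqr_ge0 ?subr_ge0.
Qed.

Section TensorSequences.
Context {R : realType} {d : nat}.
Implicit Types (a b x y f : tseq R d) (al be ga : nat -> R).

Lemma hsC k (x y : tens R d k) : hs x y = hs y x.
Proof. by apply: eq_bigr => w _; rewrite mulrC. Qed.

Lemma hs_ge0 k (x : tens R d k) : 0 <= hs x x.
Proof. by apply: sumr_ge0 => w _; rewrite -expr2 sqr_ge0. Qed.

Lemma norm_hs_le (a b g : R) k (x y : tens R d k) :
  0 < a -> 0 <= b -> g ^+ 2 <= a * b ->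
  `|g * hs x y| <= (a * hs x x + b * hs y y) / 2.
Proof.
move=> a_gt0 b_ge0 g_le.
have -> : g * hs x y = \sum_w g * (x w * y w) by rewrite /hs mulr_sumr.
have -> : (a * hs x x + b * hs y y) / 2 =
    \sum_w (a * x w ^+ 2 + b * y w ^+ 2) / 2.
  by rewrite /hs !mulr_sumr -big_split mulr_suml; apply: eq_bigr => w _; rewrite !expr2.
rewrite ler_norml -sumrN; apply/andP; split; apply: ler_sum => w _.
  by have := cross_term_le (- x w) (y w) a_gt0 b_ge0 g_le; rewrite sqrrN; lra.
by have := cross_term_le (x w) (y w) a_gt0 b_ge0 g_le; lra.
Qed.

Definition tcomb (c1 : R) a (c2 : R) b : tseq R d :=
  fun k w => c1 * a k w + c2 * b k w.

Lemma tadd_tscaleE c a b : tadd (tscale c a) b = tcomb c a 1 b.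
Proof.
apply: functional_extensionality_dep => k; apply: funext => w.
by rewrite /tadd /tscale /tcomb mul1r.
Qed.

Lemma tsubE a b : tsub a b = tcomb 1 a (-1) b.
Proof.
apply: functional_extensionality_dep => k; apply: funext => w.
by rewrite /tsub /tcomb mul1r mulN1r.
Qed.

Lemma hs_tcombl c1 a c2 b k (y : tens R d k) :
  hs (tcomb c1 a c2 b k) y = c1 * hs (a k) y + c2 * hs (b k) y.
Proof.
rewrite /hs !mulr_sumr -big_split; apply: eq_bigr => w _.
by rewrite /tcomb mulrDl !mulrA.
Qed.

Lemma hs_tcomb_le c1 a c2 b k :
  hs (tcomb c1 a c2 b k) (tcomb c1 a c2 b k) <=
  2 * c1 ^+ 2 * hs (a k) (a k) + 2 * c2 ^+ 2 * hs (b k) (b k).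
Proof.
rewrite /hs !mulr_sumr -big_split; apply: ler_sum => w _; rewrite /tcomb -subr_ge0.
set u := c1 * a k w; set v := c2 * b k w.
have -> : 2 * c1 ^+ 2 * (a k w * a k w) + 2 * c2 ^+ 2 * (b k w * b k w) -
    (u + v) * (u + v) = (u - v) ^+ 2 by rewrite /u /v; ring.
exact: sqr_ge0.
Qed.

Lemma inT0 al : inT al (@tzero R d).
Proof.
apply: (is_cvg_near_cst 0); near=> n; apply: big1 => i _.
by rewrite /hs big1 ?mulr0 // => w _; rewrite /tzero mulr0.
Unshelve. all: by end_near.
Qed.

Lemma inT_tcomb al c1 a c2 b : (forall k, 0 <= al k) ->
  inT al a -> inT al b -> inT al (tcomb c1 a c2 b).
Proof.
move=> al_ge0 ha hb.
have sq_ge0 x k : 0 <= al k * hs (x k) (x k) by rewrite mulr_ge0 ?hs_ge0.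
have wsq_ge0 c x k : 0 <= 2 * c ^+ 2 * (al k * hs (x k) (x k)).
  by rewrite mulr_ge0 // mulr_ge0 // sqr_ge0.
apply: (@series_le_cvg _ _ ((2 * c1 ^+ 2) *: (fun k => al k * hs (a k) (a k)) +
                            (2 * c2 ^+ 2) *: (fun k => al k * hs (b k) (b k)))).
- by move=> k; apply: sq_ge0.
- by move=> k; rewrite !fctE /GRing.scale /= addr_ge0.
- move=> k; rewrite !fctE /GRing.scale /= !(mulrCA _ (al k)) -mulrDr.
  by rewrite ler_wpM2l ?hs_tcomb_le ?mulrA.
by apply: is_cvg_seriesD; apply: is_cvg_seriesZ.
Qed.

Lemma wpairC ga x y : wpair ga x y = wpair ga y x.
Proof. by congr (limn (series _)); apply: funext => k; rewrite hsC. Qed.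

Lemma wpair_ge0 al x : (forall k, 0 <= al k) -> inT al x -> 0 <= wpair al x x.
Proof.
move=> al_ge0 hx; apply: limr_ge => //; near=> n.
by apply: sumr_ge0 => i _; rewrite mulr_ge0 ?hs_ge0.
Unshelve. all: by end_near.
Qed.

Lemma lin_subspace_inT al : (forall k, 0 <= al k) -> lin_subspace (@inT R d al).
Proof.
move=> al_ge0; split; first exact: inT0.
by move=> c a b ha hb; rewrite tadd_tscaleE; apply: inT_tcomb.
Qed.

Definition tbasis k (w : k.-tuple 'I_d) : tseq R d :=
  fun j v => if val v == val w then 1 else 0.

Lemma hs_tbasis_neq k w j (y : tens R d j) : j <> k -> hs (@tbasis k w j) y = 0.
Proof.
move=> jk; apply: big1 => v _; rewrite /tbasis; case: eqP => [e|_]; last by rewrite mul0r.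
by have := congr1 size e; rewrite !size_tuple.
Qed.

Lemma hs_tbasis k w (y : tens R d k) : hs (@tbasis k w k) y = y w.
Proof.
rewrite /hs (bigD1 w) //= /tbasis eqxx mul1r big1 ?addr0 // => v vw.
by rewrite val_eqE (negbTE vw) mul0r.
Qed.

Lemma series_single (u : R^nat) k : (forall j, j <> k -> u j = 0) ->
  cvgn (series u) /\ limn (series u) = u k.
Proof.
move=> u0.
have E : \forall n \near \oo, series u n = u k.
  near=> n; have kn : (k < n)%N by near: n; exists k.+1.
  rewrite /series /= big_mkord (bigD1 (Ordinal kn)) //= big1 ?addr0 // => i ik.
  by apply: u0 => e; move: ik; rewrite -val_eqE /= e eqxx.
by split; [exact: is_cvg_near_cst E | exact: lim_near_cst E].
Unshelve. all: by end_near.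
Qed.

Lemma inT_tbasis al k w : inT al (@tbasis k w).
Proof.
apply: (proj1 (series_single _ k _)) => j jk.
by rewrite hs_tbasis_neq // mulr0.
Qed.

Lemma wpair_tbasis ga k w f : wpair ga (@tbasis k w) f = ga k * f k w.
Proof.
rewrite /wpair (proj2 (series_single _ k _)) ?hs_tbasis // => j jk.
by rewrite hs_tbasis_neq // mulr0.
Qed.

Lemma wpair_separates al ga f1 f2 : (forall k, ga k != 0) ->
  (forall e, inT al e -> wpair ga e f1 = wpair ga e f2) -> teq f1 f2.
Proof.
move=> ga_neq0 eq_pair k w.
by have := eq_pair _ (inT_tbasis al k w); rewrite !wpair_tbasis => /(mulfI (ga_neq0 k)).
Qed.

End TensorSequences.

Definition admissible_weights {R : realType} (al be ga : nat -> R) : Prop :=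
  forall k, [/\ 0 < al k, 0 < be k, ga k != 0 & ga k ^+ 2 <= al k * be k].

Lemma admissible_weightsC {R : realType} {al be ga : nat -> R} :
  admissible_weights al be ga -> admissible_weights be al ga.
Proof. by move=> hw k; have [? ? ? ?] := hw k; split; rewrite // mulrC. Qed.

Section WeightedPairing.
Context {R : realType} {d : nat} {al be ga : nat -> R}.
Hypothesis hw : admissible_weights al be ga.
Implicit Types (a b x y f : tseq R d).

Let al_gt0 k : 0 < al k. Proof. by have [] := hw k. Qed.
Let be_gt0 k : 0 < be k. Proof. by have [] := hw k. Qed.

Let amgm_series x y t : R^nat := fun k =>
  (t * (al k * hs (x k) (x k)) + t^-1 * (be k * hs (y k) (y k))) / 2.

Lemma norm_wpair_term_le x y t k : 0 < t ->
  `|ga k * hs (x k) (y k)| <= amgm_series x y t k.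
Proof.
move=> t_gt0; have [_ _ _ ga_le] := hw k.
rewrite /amgm_series !mulrA; apply: norm_hs_le.
- by rewrite mulr_gt0.
- by rewrite mulr_ge0 ?invr_ge0 // ltW.
by rewrite mulrACA divff ?mul1r // gt_eqF.
Qed.

Let amgm_seriesE x y t : amgm_series x y t =
  2^-1 *: (t *: (fun k => al k * hs (x k) (x k)) +
           t^-1 *: (fun k => be k * hs (y k) (y k))).
Proof. by apply: funext => k; rewrite /amgm_series mulrC. Qed.

Let amgm_series_cvg x y t : inT al x -> inT be y -> cvgn (series (amgm_series x y t)).
Proof.
move=> hx hy; rewrite amgm_seriesE.
by apply/is_cvg_seriesZ/is_cvg_seriesD; apply: is_cvg_seriesZ.
Qed.

Let amgm_series_lim x y t : inT al x -> inT be y ->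
  limn (series (amgm_series x y t)) = (t * wpair al x x + t^-1 * wpair be y y) / 2.
Proof.
move=> hx hy; rewrite amgm_seriesE lim_seriesZ; last first.
  by apply: is_cvg_seriesD; apply: is_cvg_seriesZ.
rewrite lim_seriesD; [|exact: is_cvg_seriesZ hx|exact: is_cvg_seriesZ hy].
by rewrite !lim_seriesZ // mulrC.
Qed.

Lemma wpair_normed_cvg x y : inT al x -> inT be y ->
  cvgn [normed series (fun k => ga k * hs (x k) (y k))].
Proof.
move=> hx hy; apply: (@series_le_cvg _ _ (amgm_series x y 1)).
- by move=> k /=.
- by move=> k; apply: le_trans (normr_ge0 _) (norm_wpair_term_le x y _ k ltr01).
- by move=> k; apply: norm_wpair_term_le.
exact: amgm_series_cvg.
Qed.

Lemma wpair_cvg x y : inT al x -> inT be y ->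
  cvgn (series (fun k => ga k * hs (x k) (y k))).
Proof. by move=> hx hy; apply: (@normed_cvg _ R^o); apply: wpair_normed_cvg. Qed.

Lemma norm_wpair_le x y t : inT al x -> inT be y -> 0 < t ->
  `|wpair ga x y| <= (t * wpair al x x + t^-1 * wpair be y y) / 2.
Proof.
move=> hx hy t_gt0.
have := @lim_series_norm _ R^o _ (wpair_normed_cvg x y hx hy).
move/le_trans; apply.
rewrite -(amgm_series_lim x y t hx hy); apply: lim_series_le.
- exact: wpair_normed_cvg x y hx hy.
- exact: amgm_series_cvg x y t hx hy.
by move=> k; apply: norm_wpair_term_le.
Qed.

Lemma wpair_tcombl c1 a c2 b y : inT al a -> inT al b -> inT be y ->
  wpair ga (tcomb c1 a c2 b) y = c1 * wpair ga a y + c2 * wpair ga b y.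
Proof.
move=> ha hb hy; rewrite /wpair.
have -> : (fun k => ga k * hs (tcomb c1 a c2 b k) (y k)) =
    c1 *: (fun k => ga k * hs (a k) (y k)) + c2 *: (fun k => ga k * hs (b k) (y k)).
  by apply: funext => k; rewrite hs_tcombl !fctE /GRing.scale /=; ring.
have [ca cb] := (wpair_cvg a y ha hy, wpair_cvg b y hb hy).
rewrite lim_seriesD; [|exact: is_cvg_seriesZ ca|exact: is_cvg_seriesZ cb].
by rewrite !lim_seriesZ.
Qed.

Lemma wpair_contl f : inT be f -> cont_on (inT al) (wnorm al) (fun e => wpair ga e f).
Proof.
move=> hf a ha eps eps_gt0.
set B := wpair be f f.
have B_ge0 : 0 <= B by apply: wpair_ge0 => // k; apply: ltW.
set q := eps / (1 + B).
have q_gt0 : 0 < q by rewrite divr_gt0 // ltr_pwDl.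
exists q => // a' ha'; rewrite tsubE => dist_lt.
set x := tcomb 1 a' (-1) a.
have hx : inT al x by apply: inT_tcomb => // k; apply: ltW.
have -> : wpair ga a' f - wpair ga a f = wpair ga x f.
  by rewrite wpair_tcombl // mul1r mulN1r.
set A := wpair al x x.
have A_ge0 : 0 <= A by apply: wpair_ge0 => // k; apply: ltW.
have A_lt : A < q ^+ 2.
  by rewrite -(sqr_sqrtr A_ge0) ltr_pXn2r // ?nnegrE ?sqrtr_ge0 // ltW.
(* pairing with [t = q^-1] gives [(A / q + q B) / 2 < (q + q B) / 2 = eps / 2] *)
have qA : q^-1 * A < q by rewrite ltr_pdivrMl // mulrC -expr2.
have qB : q + q * B = eps by rewrite -[q in q + _]mulr1 -mulrDr divfK // gt_eqF ?ltr_pwDl.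
apply: le_lt_trans (norm_wpair_le x f q^-1 hx hf _) _; first by rewrite invr_gt0.
rewrite invrK -/A -/B; lra.
Qed.

End WeightedPairing.

Lemma wpair_dual_pair {R : realType} {d : nat} (al be ga : nat -> R) :
  admissible_weights al be ga -> dual_pair (@inT R d al) (@inT R d be) (wpair ga).
Proof.
move=> hw; have hw' := admissible_weightsC hw.
have ga_neq0 k : ga k != 0 by have [] := hw k.
have al_ge0 k : 0 <= al k by have [/ltW] := hw k.
have be_ge0 k : 0 <= be k by have [_ /ltW] := hw k.
split; [exact: lin_subspace_inT | split; [exact: lin_subspace_inT | split]].
  by move=> c e1 e2 f h1 h2 hf; rewrite tadd_tscaleE (wpair_tcombl hw) // mul1r.
split.
  move=> c e f1 f2 he h1 h2; rewrite tadd_tscaleE !(wpairC _ e).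
  by rewrite (wpair_tcombl hw') // mul1r.
split; first by move=> f1 f2 _ _; apply: wpair_separates.
move=> e1 e2 _ _ eq_pair; apply: (wpair_separates be) => // f hf.
by rewrite !(wpairC _ f); apply: eq_pair.
Qed.

Lemma wpair_sub_dualL {R : realType} {d : nat} (al be ga : nat -> R) :
  admissible_weights al be ga ->
  sub_dualL (@inT R d al) (@inT R d be) (wnorm al) (wpair ga).
Proof. by move=> hw f; apply: wpair_contl. Qed.

Lemma wpair_sub_dualR {R : realType} {d : nat} (al be ga : nat -> R) :
  admissible_weights al be ga ->
  sub_dualR (@inT R d al) (@inT R d be) (wnorm be) (wpair ga).
Proof.
move=> hw e he; have -> : (fun f => wpair ga e f) = (fun f => wpair ga f e).
  by apply: funext => f; apply: wpairC.
exact: wpair_contl (admissible_weightsC hw) e he.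
Qed.

Theorem mainTheorem11 (R : realType) (d : nat) (phi psi : nat -> R)
  (phi_pos : forall k, 0 < phi k) (psi_pos : forall k, 0 < psi k)
  (Hphi : growth_cond phi) (Hpsi : growth_cond (fun k => (psi k)^-1)) :
  (dual_pair (@inT R d phi) (@inT R d phi) (wpair phi) /\
   sub_dualL (@inT R d phi) (@inT R d phi) (wnorm phi) (wpair phi) /\
   sub_dualR (@inT R d phi) (@inT R d phi) (wnorm phi) (wpair phi)) /\
  (let psiinv := fun k => (psi k)^-1 in
   let p := wpair (fun k => Num.sqrt (phi k / psi k)) in
   dual_pair (@inT R d phi) (@inT R d psiinv) p /\
   sub_dualL (@inT R d phi) (@inT R d psiinv) (wnorm phi) p /\
   sub_dualR (@inT R d phi) (@inT R d psiinv) (wnorm psiinv) p).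
Proof.
have hw_diag : admissible_weights phi phi phi.
  by move=> k; split; rewrite ?gt_eqF ?expr2.
have hw_mixed : admissible_weights phi (fun k => (psi k)^-1)
                                   (fun k => Num.sqrt (phi k / psi k)).
  move=> k; have phi_psi_gt0 : 0 < phi k / psi k by rewrite divr_gt0.
  by split; rewrite ?invr_gt0 ?gt_eqF ?sqrtr_gt0 ?sqr_sqrtr // ltW.
split; last move=> psiinv p.
  by split; [|split]; [exact: wpair_dual_pair hw_diag
    | exact: wpair_sub_dualL hw_diag | exact: wpair_sub_dualR hw_diag].
by split; [|split]; [exact: wpair_dual_pair hw_mixed
  | exact: wpair_sub_dualL hw_mixed | exact: wpair_sub_dualR hw_mixed].
Qed.
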